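(* Let $K$ be a field and $a\in K^{{\mathbb N}}$ a nonzero $K$-recurrence sequence of order $d$. (a) If $K$ has characteristic $0$ and $a$ is nondegenerate, then ${\mathcal Z}(a)$ does not contain a $(d-1)$-balanced subset. (b) If $K$ has positive characteristic and $a$ is simple and nondegenerate, then ${\mathcal Z}(a)$ does not contain a $(d-1)$-balanced subset.
   Context: ${\mathbb N}=\{0,1,2,\dots\}$, ${\mathcal Z}(a)=\{n\in{\mathbb N}\mid a(n)=0\}$. The minimum polynomial $P_a$ is the monic generator of $\{P\in K[E]\mid P(E)a=0\}$, $(Ea)(n)=a(n+1)$; its degree is the order of $a$. $a$ is simple if $P_a$ has distinct roots and nondegenerate if its roots are nonzero and no quotient of two distinct roots is a root of unity. For an integer $e\ge0$, an $e$-balanced subset of ${\mathbb N}$ is a set $\{m_0+k_1m_1+\cdots+k_em_e\mid k_1,\dots,k_e\in\{0,1\}\}$ with $m_0\in{\mathbb N}$ and $m_1,\dots,m_e$ positive integers. *)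

From HB Require Import structures.
From mathcomp Require Import all_boot all_order all_algebra.
Set Implicit Arguments. Unset Strict Implicit. Unset Printing Implicit Defensive.
Import GRing.Theory.
Local Open Scope ring_scope.

Section RecSeq.
Variable K : fieldType.

(* (P(E) a)(n) = sum_i P_i a(n+i), where (E a)(n) = a(n+1) *)
Definition polyE_apply (P : {poly K}) (a : nat -> K) : nat -> K :=
  fun n => \sum_(i < size P) P`_i * a (n + i)%N.

Definition annihilates (P : {poly K}) (a : nat -> K) : Prop :=
  forall n, polyE_apply P a n = 0.

Definition is_recurrence (a : nat -> K) : Prop :=
  exists P : {poly K}, P != 0 /\ annihilates P a.

Definition is_min_poly (a : nat -> K) (P : {poly K}) : Prop :=
  P \is monic /\ annihilates P a /\
  (forall Q : {poly K}, annihilates Q a -> P %| Q).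

Definition rec_order (P : {poly K}) : nat := (size P).-1.

Definition zero_set (a : nat -> K) : nat -> Prop := fun n => a n = 0.

(* Roots are taken in (arbitrary) field extensions of K, given by a ring
   morphism f : K -> L; this is equivalent to taking roots in an algebraic
   closure of K. *)

Definition simple_poly (P : {poly K}) : Prop :=
  forall (L : fieldType) (f : {rmorphism K -> L}) (x : L),
    ~ (('X - x%:P) ^+ 2 %| map_poly f P).

Definition nondegenerate_poly (P : {poly K}) : Prop :=
  forall (L : fieldType) (f : {rmorphism K -> L}) (x y : L),
    root (map_poly f P) x -> root (map_poly f P) y ->
    x != 0 /\ (x != y -> forall n : nat, (0 < n)%N -> (x / y) ^+ n != 1).

(* S is an e-balanced subset:
   S = { m0 + k_1 m_1 + ... + k_e m_e | k_i in {0,1} }, m_i > 0.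
   We index m_1..m_e as m 0 .. m (e-1). *)
Definition balanced_set (e : nat) (S : nat -> Prop) : Prop :=
  exists (m0 : nat) (m : 'I_e -> nat), (forall i, (0 < m i)%N) /\
    (forall s : nat, S s <->
       exists k : 'I_e -> bool, s = (m0 + \sum_(i < e) k i * m i)%N).

Definition contains_balanced (e : nat) (Z : nat -> Prop) : Prop :=
  exists S : nat -> Prop, balanced_set e S /\ (forall s, S s -> Z s).

End RecSeq.

From HB Require Import structures.
From mathcomp Require Import all_boot all_order all_algebra all_field.
From Stdlib Require Import Classical.
Set Implicit Arguments. Unset Strict Implicit. Unset Printing Implicit Defensive.
Import GRing.Theory.
Local Open Scope ring_scope.

(* Let Q annihilate b, with b vanishing on the e-balanced set
   generated by m0, m_1, ..., m_e, and let l be a root of Q in some extension.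
   With M = m_e, the sequence c = (E^M - l^M) b vanishes on the (e-1)-balanced
   set generated by m0, m_1, ..., m_(e-1) and is annihilated by Q / (X - l),
   so c = 0 by induction.  Hence b is annihilated by gcd(Q, X^M - l^M).  By
   nondegeneracy every common root z satisfies z^M = l^M, hence z = l; and l is
   a simple root of X^M - l^M in characteristic 0, of Q when Q is simple.  So
   the gcd is X - l, b is geometric with ratio l <> 0, and b m0 = 0 kills it. *)

Section ShiftOperator.
Variable F : fieldType.
Implicit Types (p q : {poly F}) (a : nat -> F).

Lemma polyE_apply_widen p a n N : (size p <= N)%N ->
  polyE_apply p a n = \sum_(i < N) p`_i * a (n + i)%N.
Proof.
move=> le_pN; rewrite /polyE_apply (big_ord_widen N (fun i => p`_i * a (n + i)%N) le_pN).
rewrite [RHS](bigID (fun i : 'I_N => (i < size p)%N)) /= [X in _ + X]big1 ?addr0 // => i.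
by rewrite -leqNgt => /(nth_default 0) ->; rewrite mul0r.
Qed.

Lemma polyE_applyD p q a n :
  polyE_apply (p + q) a n = polyE_apply p a n + polyE_apply q a n.
Proof.
set N := maxn (size p) (size q).
have le_pqN : (size (p + q)%R <= N)%N by rewrite (leq_trans (size_polyD _ _)).
rewrite !(@polyE_apply_widen _ a n N) ?leq_maxl ?leq_maxr // -big_split /=.
by apply: eq_bigr => i _; rewrite coefD mulrDl.
Qed.

Lemma polyE_applyZ c p a n : polyE_apply (c *: p) a n = c * polyE_apply p a n.
Proof.
rewrite (@polyE_apply_widen _ a n (size p)) ?size_scale_leq // mulr_sumr.
by apply: eq_bigr => i _; rewrite coefZ mulrA.
Qed.

Lemma polyE_applyC c a n : polyE_apply c%:P a n = c * a n.
Proof.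
by rewrite (@polyE_apply_widen _ a n 1) ?size_polyC_leq1 // big_ord1 coefC addn0.
Qed.

Lemma polyE_applyMX p a n : polyE_apply (p * 'X) a n = polyE_apply p a n.+1.
Proof.
have le_pX : (size (p * 'X)%R <= (size p).+1)%N.
  by rewrite (leq_trans (size_polyMleq _ _)) // size_polyX addn2.
rewrite (@polyE_apply_widen _ a n _ le_pX) big_ord_recl coefMX /= mul0r add0r.
by apply: eq_bigr => i _; rewrite coefMX /= addnS.
Qed.

Lemma polyE_applyM p q a n :
  polyE_apply (p * q) a n = polyE_apply p (polyE_apply q a) n.
Proof.
elim/poly_ind: p n => [|p c IH] n; first by rewrite mul0r /polyE_apply size_poly0 !big_ord0.
rewrite mulrDl polyE_applyD -mulrA [_ * q]mulrC mulrA polyE_applyMX IH -polyE_applyMX.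
by rewrite mul_polyC polyE_applyZ polyE_applyD polyE_applyC.
Qed.

Lemma polyE_applyXn k a n : polyE_apply 'X^k a n = a (n + k)%N.
Proof.
elim: k n => [|k IH] n; first by rewrite expr0 polyE_applyC mul1r addn0.
by rewrite exprSr polyE_applyMX IH addSnnS.
Qed.

Lemma polyE_applyXnsubC k l a n :
  polyE_apply ('X^k - l%:P) a n = a (n + k)%N - l * a n.
Proof. by rewrite -polyCN polyE_applyD polyE_applyXn polyE_applyC mulNr. Qed.

Lemma annihilates_mull q p a : annihilates p a -> annihilates (q * p) a.
Proof.
move=> pa n; rewrite polyE_applyM /polyE_apply big1 // => i _.
by have := pa (n + i)%N; rewrite /polyE_apply => ->; rewrite mulr0.
Qed.

Lemma annihilatesD p q a :
  annihilates p a -> annihilates q a -> annihilates (p + q) a.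
Proof. by move=> pa qa n; rewrite polyE_applyD pa qa addr0. Qed.

Lemma annihilates_dvdp p q a : p %| q -> annihilates p a -> annihilates q a.
Proof. by move=> /divpK <-; apply: annihilates_mull. Qed.

Lemma annihilates_gcdp p q a :
  annihilates p a -> annihilates q a -> annihilates (gcdp p q) a.
Proof.
move=> pa qa; have /andP[_ /annihilates_dvdp] := egcdpE p q; apply.
by apply: annihilatesD; apply: annihilates_mull.
Qed.

Lemma annihilates_divp_apply d p q a : d %| p -> d %| q ->
  annihilates p a -> annihilates (p %/ d) (polyE_apply q a).
Proof.
move=> dp dq pa n; rewrite -polyE_applyM -(divpK dq) mulrA [_ * (q %/ d)]mulrC.
by rewrite -mulrA divpK //; apply: annihilates_mull.
Qed.

(* p is a nonzero constant or has two nonzero coefficients, so a zero of a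
   propagates in both directions. *)
Lemma deg1_recurrence_eq0 p a m0 : p.[0] != 0 -> (size p <= 2)%N ->
  annihilates p a -> a m0 = 0 -> forall n, a n = 0.
Proof.
rewrite horner_coef0 => p0_neq0 le_p2 pa am0.
have rec n : p`_0 * a n + p`_1 * a n.+1 = 0.
  by have := pa n; rewrite (polyE_apply_widen _ _ le_p2) big_ord_recl big_ord1 addn0 addn1.
have [p1_0 | p1_neq0] := eqVneq p`_1 0.
  by move=> n; have /eqP := rec n; rewrite p1_0 mul0r addr0 mulf_eq0 (negbTE p0_neq0) => /eqP.
have step n : (a n.+1 == 0) = (a n == 0).
  have e : p`_0 * a n = - (p`_1 * a n.+1) by apply/eqP; rewrite -addr_eq0 rec.
  by rewrite -[a n.+1 == 0]/(false || _) -(negbTE p1_neq0) -mulf_eq0 -oppr_eq0 -e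
             mulf_eq0 (negbTE p0_neq0).
have a0 n : (a n == 0) = (a 0%N == 0) by elim: n => // n IH; rewrite step.
by move=> n; apply/eqP; rewrite a0 -(a0 m0) am0.
Qed.

End ShiftOperator.

Lemma polyE_apply_map (F L : fieldType) (f : {rmorphism F -> L}) (p : {poly F}) a n :
  polyE_apply (map_poly f p) (fun k => f (a k)) n = f (polyE_apply p a n).
Proof.
rewrite /polyE_apply size_map_poly rmorph_sum; apply: eq_bigr => i _.
by rewrite coef_map rmorphM.
Qed.

Lemma annihilates_map (F L : fieldType) (f : {rmorphism F -> L}) (p : {poly F}) a :
  annihilates p a -> annihilates (map_poly f p) (fun k => f (a k)).
Proof. by move=> pa n; rewrite polyE_apply_map pa rmorph0. Qed.

Lemma exists_root_ext (F : fieldType) (p : {poly F}) : (1 < size p)%N ->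
  exists (L : fieldType) (f : {rmorphism F -> L}) (z : L), root (map_poly f p) z.
Proof.
move: {2}(size p) (leqnn (size p)) => n; elim: n p => [|n IH] p le_pn p_gt1.
  by have := leq_trans p_gt1 le_pn.
have [irr_p | red_p] := classic (irreducible_poly p).
  by have [L _ [z pz _]] := irredp_FAdjoin irr_p; exists L, (in_alg L), z.
have [q [q_neq1 qp q_neq_p]] : exists q : {poly F}, [/\ size q != 1, q %| p & ~~ (q %= p)].
  apply: NNPP => no_q; apply: red_p; split => // q q_neq1 qp.
  by apply: contraT => q_neq_p; case: no_q; exists q.
have p_neq0 : p != 0 by rewrite -size_poly_gt0 ltnW.
have q_neq0 : q != 0 by apply: contra_neq p_neq0 => q0; apply/eqP; rewrite -dvd0p -q0.
have [L [f [z qz]]] : exists (L : fieldType) (f : {rmorphism F -> L}) (z : L),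
    root (map_poly f q) z.
  apply: IH; last by rewrite ltn_neqAle eq_sym q_neq1 size_poly_gt0.
  by rewrite -ltnS (leq_trans _ le_pn) // ltn_neqAle dvdp_size_eqp // q_neq_p dvdp_leq.
by exists L, f, z; apply: root_dvdp qz; rewrite dvdp_map.
Qed.

Lemma exists_common_root_ext (F : fieldType) (p q : {poly F}) :
  p != 0 -> ~~ coprimep p q ->
  exists (L : fieldType) (f : {rmorphism F -> L}) (z : L),
    root (map_poly f p) z /\ root (map_poly f q) z.
Proof.
move=> p_neq0; rewrite coprimep_def => gcd_neq1.
have gcd_gt1 : (1 < size (gcdp p q))%N.
  by rewrite ltn_neqAle eq_sym gcd_neq1 size_poly_gt0 gcdp_eq0 negb_and p_neq0.
have [L [f [z gz]]] := exists_root_ext gcd_gt1.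
by exists L, f, z; split; apply: root_dvdp gz; rewrite dvdp_map ?dvdp_gcdl ?dvdp_gcdr.
Qed.

Section Nondegenerate.
Variable F : fieldType.
Implicit Types (p q : {poly F}).

Lemma nondegenerate_root_neq0 p x : nondegenerate_poly p -> root p x -> x != 0.
Proof. by move=> nd px; have := nd F idfun x x; rewrite map_poly_id // => /(_ px px) []. Qed.

Lemma nondegenerate_neq0 p : nondegenerate_poly p -> p != 0.
Proof.
move=> nd; apply/eqP => p0; have := nondegenerate_root_neq0 (x := 0) nd.
by rewrite p0 root0 eqxx => /(_ isT).
Qed.

Lemma nondegenerate_horner0 p : nondegenerate_poly p -> p.[0] != 0.
Proof. by move=> nd; apply/negP => p0; have := nondegenerate_root_neq0 nd p0; rewrite eqxx. Qed.

Lemma nondegenerate_expI p (L : fieldType) (f : {rmorphism F -> L}) x y M :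
  nondegenerate_poly p -> root (map_poly f p) x -> root (map_poly f p) y ->
  (0 < M)%N -> x ^+ M = y ^+ M -> x = y.
Proof.
move=> nd px py M_gt0 xyM; apply/eqP; apply: contraT => x_neq_y.
have [y_neq0 _] := nd L f y x py px.
have [_ /(_ x_neq_y M M_gt0)] := nd L f x y px py.
by rewrite expr_div_n xyM divff ?eqxx // expf_neq0.
Qed.

Lemma nondegenerate_dvdp p q :
  p %| q -> nondegenerate_poly q -> nondegenerate_poly p.
Proof.
move=> pq nd L f x y px py.
by apply: (nd L f); [apply: root_dvdp px | apply: root_dvdp py]; rewrite dvdp_map.
Qed.

Lemma nondegenerate_map (L : fieldType) (f : {rmorphism F -> L}) p :
  nondegenerate_poly p -> nondegenerate_poly (map_poly f p).
Proof. by move=> nd L' g x y; rewrite -map_poly_comp; apply: nd. Qed.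

Lemma simple_dvdp p q : p %| q -> simple_poly q -> simple_poly p.
Proof.
move=> pq sq L f x Dx2p; apply: (sq L f x); apply: dvdp_trans Dx2p _.
by rewrite dvdp_map.
Qed.

Lemma simple_map (L : fieldType) (f : {rmorphism F -> L}) p :
  simple_poly p -> simple_poly (map_poly f p).
Proof. by move=> sp L' g x; rewrite -map_poly_comp; apply: sp. Qed.

End Nondegenerate.

(* The hypotheses of part (a) or of part (b). *)
Definition admissible_poly (F : fieldType) (p : {poly F}) :=
  nondegenerate_poly p /\ ([pchar F] =i pred0 \/ simple_poly p).

Section Admissible.
Variable F : fieldType.
Implicit Types (p q : {poly F}).

Lemma admissible_dvdp p q : p %| q -> admissible_poly q -> admissible_poly p.
Proof.
move=> pq [nd ch0_or_sq]; split; first exact: nondegenerate_dvdp nd.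
by case: ch0_or_sq => [ch0 | sq]; [left | right; apply: simple_dvdp sq].
Qed.

Lemma admissible_map (L : fieldType) (f : {rmorphism F -> L}) p :
  admissible_poly p -> admissible_poly (map_poly f p).
Proof.
move=> [nd ch0_or_sp]; split; first exact: nondegenerate_map.
case: ch0_or_sp => [ch0 | sp]; last by right; apply: simple_map.
by left => r; rewrite (fmorph_pchar f) ch0.
Qed.

Lemma horner_divXsubC p l : root p l -> (p %/ ('X - l%:P)).[l] = p^`().[l].
Proof.
move=> pl; rewrite -[in RHS](divpK (_ : 'X - l%:P %| p)) ?dvdp_XsubCl //.
by rewrite derivM derivXsubC !hornerE subrr mulr0 add0r.
Qed.

Lemma XnsubC_divXsubC_root (l : F) M : [pchar F] =i pred0 -> l != 0 -> (0 < M)%N ->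
  ~~ root (('X^M - (l ^+ M)%:P) %/ ('X - l%:P)) l.
Proof.
move=> ch0 l_neq0 M_gt0; rewrite /root horner_divXsubC; last by rewrite /root !hornerE subrr.
rewrite derivB derivXn derivC subr0 hornerMn hornerXn -mulr_natr mulf_eq0 negb_or.
by rewrite expf_neq0 //= ((pcharf0P _).1 ch0) -lt0n.
Qed.

Lemma simple_divXsubC_root p l : simple_poly p -> root p l ->
  ~~ root (p %/ ('X - l%:P)) l.
Proof.
move=> sp pl; apply/negP => ql; apply: (sp F idfun l); rewrite map_poly_id //.
have -> : p = p %/ ('X - l%:P) * ('X - l%:P) by rewrite divpK // dvdp_XsubCl.
by rewrite expr2 dvdp_mul // dvdp_XsubCl.
Qed.

(* Nondegeneracy leaves l as the only possible common root; the last
   hypothesis says that it is a simple root of p or of X^M - l^M. *)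
Lemma gcdp_XnsubC_dvdp p l M : nondegenerate_poly p -> root p l -> (0 < M)%N ->
  ~~ (root (p %/ ('X - l%:P)) l && root (('X^M - (l ^+ M)%:P) %/ ('X - l%:P)) l) ->
  gcdp p ('X^M - (l ^+ M)%:P) %| 'X - l%:P.
Proof.
move=> nd pl M_gt0 not_double.
set D := 'X - l%:P; set XM := 'X^M - _.
have XMl : root XM l by rewrite /root !hornerE subrr.
have pD : p = p %/ D * D by rewrite divpK // dvdp_XsubCl.
have XMD : XM = XM %/ D * D by rewrite divpK // dvdp_XsubCl.
suff cop : coprimep (p %/ D) (XM %/ D).
  rewrite pD XMD (eqp_dvdl _ (gcdp_mul2r _ _ _)).
  by rewrite (eqp_dvdl _ (eqp_mulr D (_ : _ %= 1))) ?gcdp_eqp1 // mul1r dvdpp.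
apply: contraT => ncop.
have R_neq0 : p %/ D != 0.
  by apply: contra_neq (nondegenerate_neq0 nd) => R0; rewrite pD R0 mul0r.
have [L [f [z [Rz Tz]]]] := exists_common_root_ext R_neq0 ncop.
have pz : root (map_poly f p) z by rewrite pD rmorphM rootM /= Rz.
have pfl : root (map_poly f p) (f l) by rewrite fmorph_root.
have zM : z ^+ M = f l ^+ M.
  have : root (map_poly f XM) z by rewrite XMD rmorphM rootM /= Tz.
  by rewrite /XM rmorphB /= map_polyXn map_polyC /= rmorphXn /root !hornerE subr_eq0 => /eqP.
have zl := nondegenerate_expI nd pz pfl M_gt0 zM.
by move: not_double; rewrite -!(fmorph_root f) -zl Rz Tz.
Qed.

Lemma admissible_gcdp_XnsubC_dvdp p l M : admissible_poly p -> root p l -> (0 < M)%N ->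
  gcdp p ('X^M - (l ^+ M)%:P) %| 'X - l%:P.
Proof.
move=> [nd [ch0 | sp]] pl M_gt0; apply: gcdp_XnsubC_dvdp => //; rewrite negb_and.
  by rewrite XnsubC_divXsubC_root ?orbT // (nondegenerate_root_neq0 nd pl).
by rewrite simple_divXsubC_root.
Qed.

Lemma admissible_XnsubC_annihilates_eq0 p l M (a : nat -> F) m0 :
  admissible_poly p -> root p l -> (0 < M)%N -> annihilates p a ->
  annihilates ('X^M - (l ^+ M)%:P) a -> a m0 = 0 -> forall n, a n = 0.
Proof.
move=> adp pl M_gt0 pa XMa.
have Da := annihilates_dvdp (admissible_gcdp_XnsubC_dvdp adp pl M_gt0)
                            (annihilates_gcdp pa XMa).
apply: deg1_recurrence_eq0 Da; last by rewrite size_XsubC.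
by rewrite hornerXsubC sub0r oppr_eq0 (nondegenerate_root_neq0 adp.1 pl).
Qed.

End Admissible.

Lemma extend_bool_weights e (m : 'I_e.+1 -> nat) (k : 'I_e -> bool) (t : bool) :
  exists k' : 'I_e.+1 -> bool, (\sum_(i < e.+1) k' i * m i =
    \sum_(i < e) k i * m (widen_ord (leqnSn e) i) + t * m ord_max)%N.
Proof.
exists (fun i => if unlift ord_max i is Some j then k j else t).
rewrite big_ord_recr /= unlift_none; congr (_ + _)%N; apply: eq_bigr => i _.
have -> : widen_ord (leqnSn e) i = lift ord_max i.
  by apply: val_inj; rewrite /= /bump leqNgt ltn_ord.
by rewrite liftK.
Qed.

Lemma balanced_zeros_eq0 e : forall (F : fieldType) (p : {poly F}) (a : nat -> F) m0
    (m : 'I_e -> nat),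
  admissible_poly p -> (size p <= e.+2)%N -> annihilates p a -> (forall i, 0 < m i)%N ->
  (forall k : 'I_e -> bool, a (m0 + \sum_(i < e) k i * m i)%N = 0) -> forall n, a n = 0.
Proof.
elim: e => [|e IH] F p a m0 m adp le_p pa m_gt0 a_cube.
  exact: deg1_recurrence_eq0 (nondegenerate_horner0 adp.1) le_p pa (a_cube (fun=> false)).
have am0 : a m0 = 0 by have := a_cube (fun=> false); rewrite big1 ?addn0.
have [p_le2 | p_gt2] := leqP (size p) 2.
  exact: deg1_recurrence_eq0 (nondegenerate_horner0 adp.1) p_le2 pa am0.
have [L [f [l pl]]] := exists_root_ext (ltnW p_gt2).
suff fa0 : forall n, f (a n) = 0 by move=> n; apply/eqP; rewrite -(fmorph_eq0 f) fa0.
set M := m ord_max; set XM := 'X^M - (l ^+ M)%:P.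
have XMl : root XM l by rewrite /root !hornerE subrr.
have adfp := admissible_map f adp.
apply: (admissible_XnsubC_annihilates_eq0 (m0 := m0) adfp pl (m_gt0 ord_max)
          (annihilates_map f pa)).
  move=> n; apply: (IH L (map_poly f p %/ ('X - l%:P)) _ m0
                       (fun i => m (widen_ord (leqnSn e) i))).
  - by apply: admissible_dvdp adfp; apply: divp_dvd; rewrite dvdp_XsubCl.
  - by rewrite size_divp ?polyXsubC_eq0 // size_XsubC size_map_poly leq_subLR.
  - by apply: annihilates_divp_apply (annihilates_map f pa); rewrite dvdp_XsubCl.
  - by move=> i.
  move=> k; rewrite polyE_applyXnsubC.
  have [k1 Ek1] := extend_bool_weights m k true; have [k0 Ek0] := extend_bool_weights m k false.
  move: (a_cube k1) (a_cube k0); rewrite Ek1 Ek0 mul1n mul0n !addn0 addnA => -> ->.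
  by rewrite rmorph0 mulr0 subrr.
by rewrite am0 rmorph0.
Qed.

Theorem lemma2p6 (K : fieldType) (a : nat -> K) (P : {poly K}) :
  is_recurrence a -> is_min_poly a P -> (exists n, a n != 0) ->
  (* (a) characteristic 0, nondegenerate *)
  ([pchar K] =i pred0 -> nondegenerate_poly P ->
     ~ contains_balanced (rec_order P).-1 (zero_set a)) /\
  (* (b) positive characteristic, simple and nondegenerate *)
  ((exists p : nat, p \in [pchar K]) -> simple_poly P -> nondegenerate_poly P ->
     ~ contains_balanced (rec_order P).-1 (zero_set a)).
Proof.
move=> _ [_ [Pa _]] [n an_neq0].
suff no_cube : admissible_poly P -> ~ contains_balanced (rec_order P).-1 (zero_set a).
  by split=> [ch0 nd | _ sP nd]; apply: no_cube; split=> //; [left | right].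
move=> adP [S [[m0 [m [m_gt0 Sm]]] SZ]].
have an0 : a n = 0.
  apply: (balanced_zeros_eq0 adP _ Pa m_gt0) => [|k].
    by rewrite /rec_order; case: (size P) => [|[|]].
  by apply/SZ/Sm; exists k.
by rewrite an0 eqxx in an_neq0.
Qed.
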